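(* Let $G$ be a connected graph of order $n\geq 4$ and let $k$ be an integer with $3\leq k\leq n$. Then $px_k(G)=n-1$ if and only if $G\cong S_n$, the star on $n$ vertices.
   Context: All graphs are finite, simple, undirected and connected. An edge-coloring of a graph assigns a color to each edge (adjacent edges may receive the same color). A tree in an edge-colored graph is proper if any two adjacent edges of the tree receive different colors. For $S\subseteq V(G)$, an $S$-tree is a subgraph of $G$ that is a tree containing all vertices of $S$. For a connected graph $G$ of order $n$ and an integer $k$ with $2\le k\le n$, an edge-coloring of $G$ is a $k$-proper coloring if for every set $S$ of $k$ vertices of $G$ there exists a proper $S$-tree in $G$. The $k$-proper index $px_k(G)$ is the minimum number of colors used in a $k$-proper coloring of $G$. The star $S_n$ is the tree $K_{1,n-1}$ on $n$ vertices. *)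

From mathcomp Require Import all_boot.
Set Implicit Arguments. Unset Strict Implicit. Unset Printing Implicit Defensive.

Definition simple_graph (T : finType) (e : rel T) : Prop :=
  symmetric e /\ irreflexive e.

Definition connected_graph (T : finType) (e : rel T) : Prop :=
  forall x y : T, connect e x y.

Definition edge_coloring (T : finType) (e : rel T) (c : T -> T -> nat) : Prop :=
  forall x y, e x y -> c x y = c y x.

Definition ncolors (T : finType) (e : rel T) (c : T -> T -> nat) : nat :=
  size (undup [seq c p.1 p.2 | p <- enum [pred p : T * T | e p.1 p.2]]).

Definition subgraph (T : finType) (e : rel T) (V : {set T}) (f : rel T) : Prop :=
  symmetric f /\ (forall x y, f x y -> [&& e x y, x \in V & y \in V]).

Definition is_tree (T : finType) (V : {set T}) (f : rel T) : Prop :=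
  [/\ V != set0,
      (forall x y, x \in V -> y \in V -> connect f x y) &
      ~ (exists p : seq T, [/\ uniq p, 2 < size p & cycle f p])].

Definition proper_tree (T : finType) (f : rel T) (c : T -> T -> nat) : Prop :=
  forall x y z, f x y -> f y z -> x != z -> c x y != c y z.

Definition has_proper_S_tree (T : finType) (e : rel T) (c : T -> T -> nat)
  (S : {set T}) : Prop :=
  exists (V : {set T}) (f : rel T),
    [/\ subgraph e V f, is_tree V f, S \subset V & proper_tree f c].

Definition k_proper_coloring (T : finType) (e : rel T) (k : nat)
  (c : T -> T -> nat) : Prop :=
  edge_coloring e c /\
  forall S : {set T}, #|S| = k -> has_proper_S_tree e c S.

Definition k_proper_with (T : finType) (e : rel T) (k m : nat) : Prop :=
  exists c, k_proper_coloring e k c /\ ncolors e c = m.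

Definition pxk_eq (T : finType) (e : rel T) (k m : nat) : Prop :=
  k_proper_with e k m /\ (forall m', k_proper_with e k m' -> m <= m').

(* The star S_n = K_{1,n-1} on vertex set 'I_n, with center 0. *)
Definition star_rel (n : nat) : rel 'I_n :=
  fun x y => (val x == 0) != (val y == 0).

Definition graph_iso (T U : finType) (e : rel T) (e' : rel U) : Prop :=
  exists f : T -> U, bijective f /\ forall x y, e' (f x) (f y) = e x y.

From mathcomp Require Import all_boot perm zify.
Set Implicit Arguments. Unset Strict Implicit. Unset Printing Implicit Defensive.

(* For a star with center r, any tree containing two leaves a and b contains
   the path a r b, so the n - 1 leaf edges need pairwise distinct colors, and
   coloring each leaf edge by its leaf attains n - 1.  A connected non-star graph
   on n >= 4 vertices has a rooted spanning tree with two disjoint edges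
   (u, par u) and (w, par w).  Coloring each tree edge (v, par v) by v, except
   that u takes the color of w, keeps adjacent tree edges differently colored;
   the whole spanning tree is then a proper S-tree for every S, with only n - 2
   colors, so px_k < n - 1. *)

Lemma exists_superset_card (T : finType) (A : {set T}) k :
  #|A| <= k <= #|T| -> exists2 S : {set T}, A \subset S & #|S| = k.
Proof.
case/andP=> Ak kT; set B := [set x in take (k - #|A|) (enum (~: A))].
have cardB : #|B| = k - #|A|.
  rewrite cardsE (card_uniqP _) ?take_uniq ?enum_uniq // size_takel // -cardE.
  by rewrite -(leq_add2l #|A|) cardsC subnKC.
have AB0 : A :&: B = set0.
  apply/setP=> x; rewrite !inE; apply/andP=> -[xA /mem_take].
  by rewrite mem_enum inE xA.
exists (A :|: B); first exact: subsetUl.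
by rewrite cardsU AB0 cards0 subn0 cardB subnKC.
Qed.

Lemma connect_first_step (T : finType) (f : rel T) a b :
  connect f a b -> a != b -> exists y, f a y.
Proof.
case/connectP=> [[|y p]] /= => [_ ->|/andP [fay _] _ _]; first by rewrite eqxx.
by exists y.
Qed.

Definition vertex_color (T : finType) (v : T) : nat := enum_rank v.

Lemma eq_vertex_color (T : finType) (a b : T) :
  (vertex_color a == vertex_color b) = (a == b).
Proof. by rewrite /vertex_color (inj_eq val_inj) (inj_eq enum_rank_inj). Qed.

Lemma ncolors_le_card (T : finType) (e : rel T) (c : T -> T -> nat)
    (A : {set T}) :
  (forall x y, e x y -> exists2 v, v \in A & c x y = vertex_color v) ->
  ncolors e c <= #|A|.
Proof.
move=> cA; rewrite -(size_image (@vertex_color T)).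
apply: uniq_leq_size (undup_uniq _) _ => i; rewrite mem_undup.
case/mapP=> -[x y]; rewrite mem_enum => /cA [v vA ->] ->.
exact: image_f.
Qed.

Section RootedTree.
Variables (T : finType) (e : rel T).

Definition rooted_tree (r : T) (par : T -> T) (d : T -> nat) : Prop :=
  forall x, x != r -> e x (par x) /\ d (par x) < d x.

Lemma exists_rooted_tree :
  symmetric e -> connected_graph e -> forall r, exists par d, rooted_tree r par d.
Proof.
move=> e_sym conn r.
pose reachable x n := [exists p : n.-tuple T, path e r p && (last r p == x)].
have ex x : exists n, reachable x n.
  have /connectP [p pp ->] := conn r x.
  by exists (size p); apply/existsP; exists (in_tuple p); rewrite pp eqxx.
pose d x := ex_minn (ex x).
have dP x : reachable x (d x) by rewrite /d; case: ex_minnP.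
have dmin x n : reachable x n -> d x <= n by rewrite /d; case: ex_minnP => m _; apply.
have down x : x != r -> exists y, e x y && (d y < d x).
  move=> xr; case/existsP: (dP x) => p.
  case/lastP: {p}(tval p) (size_tuple p) => [|p y] sz.
    by rewrite /= => /eqP xr'; rewrite xr' eqxx in xr.
  rewrite rcons_path last_rcons => /andP [/andP [pp ey] /eqP yx]; subst y.
  exists (last r p); rewrite e_sym ey /=.
  have : reachable (last r p) (size p).
    by apply/existsP; exists (in_tuple p); rewrite pp eqxx.
  by move/dmin; rewrite -sz size_rcons ltnS.
exists (fun x => odflt r [pick y | e x y && (d y < d x)]), d => x xr.
case: pickP => [y /andP [] //|none].
by have [y] := down x xr; rewrite none.
Qed.

Section TreeColoring.
Variables (r : T) (par : T -> T) (d : T -> nat).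
Hypotheses (sg : simple_graph e) (tree : rooted_tree r par d).

Definition child (x y : T) : bool := (x != r) && (par x == y).

Definition tree_rel : rel T := fun x y => child x y || child y x.

Lemma child_edge x y : child x y -> e x y /\ d y < d x.
Proof. by case/andP=> xr /eqP <-; apply: tree. Qed.

Lemma child_asym x y : child x y -> ~~ child y x.
Proof.
move=> /child_edge [_ ltyx]; apply/negP=> /child_edge [_ ltxy].
by have := ltn_trans ltyx ltxy; rewrite ltnn.
Qed.

Lemma tree_rel_sym : symmetric tree_rel.
Proof. by move=> x y; rewrite /tree_rel orbC. Qed.

Lemma tree_rel_subgraph : subgraph e [set: T] tree_rel.
Proof.
split; first exact: tree_rel_sym.
move=> x y; rewrite !inE !andbT => /orP [/child_edge [] //|/child_edge [eyx _]].
by case: sg => e_sym _; rewrite e_sym.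
Qed.

Lemma tree_rel_connect_root x : connect tree_rel x r.
Proof.
have [n] := ubnP (d x); elim: n => // n IH in x *; rewrite ltnS => dxn.
have [->|xr] := eqVneq x r; first exact: connect0.
have cx : child x (par x) by rewrite /child xr eqxx.
apply: connect_trans (IH _ (leq_trans (child_edge cx).2 dxn)).
by apply: connect1; rewrite /tree_rel cx.
Qed.

Lemma tree_rel_uphill x z : tree_rel x z -> d z <= d x -> par x = z.
Proof.
case/orP=> [/andP [_ /eqP //]|/child_edge [_ ltxz]].
by rewrite leqNgt ltxz.
Qed.

Lemma tree_rel_acyclic :
  ~ (exists p : seq T, [/\ uniq p, 2 < size p & cycle tree_rel p]).
Proof.
case=> p [up sp cp]; have [x0 p_x0] : exists x0, x0 \in p.
  by case: p sp {up cp} => // x0 p _; exists x0; rewrite mem_head.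
have [x px xmax] := arg_maxnP d p_x0.
have [i s rot_p] := rot_to px.
have ps t : t \in s -> t \in p by move=> ts; rewrite -(mem_rot i) rot_p inE ts orbT.
have : [/\ uniq (x :: s), 2 < size (x :: s) & cycle tree_rel (x :: s)].
  by rewrite -rot_p rot_uniq size_rot rot_cycle.
case: s {rot_p} ps => [|y [|a t]] ps [] // /andP [_ /andP [yt _]] _.
rewrite /cycle rcons_path => /andP [/andP [xy _] /= zx].
have zs : last a t \in [:: y, a & t] by rewrite in_cons mem_last orbT.
have ys : y \in [:: y, a & t] by rewrite mem_head.
have pxy := tree_rel_uphill xy (xmax _ (ps _ ys)).
rewrite tree_rel_sym in zx; have pxz := tree_rel_uphill zx (xmax _ (ps _ zs)).
by move: yt; rewrite -pxy pxz mem_last.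
Qed.

Lemma tree_rel_spanning_tree : is_tree [set: T] tree_rel.
Proof.
split; [by apply/set0Pn; exists r | move=> x y _ _ | exact: tree_rel_acyclic].
apply: connect_trans (tree_rel_connect_root x) _.
by rewrite (sym_connect_sym tree_rel_sym); apply: tree_rel_connect_root.
Qed.

Definition tree_edges_meet (a b : T) : bool :=
  [|| a == b, a == par b, par a == b | par a == par b].

Variables (lab : T -> T) (z0 : T).

(* Non-tree edges get the label of [z0], so every color labels a non-root vertex. *)
Definition tree_coloring (x y : T) : nat :=
  vertex_color (if child y x then lab y else if child x y then lab x else lab z0).

Lemma tree_coloring_sym x y : tree_coloring x y = tree_coloring y x.
Proof.
rewrite /tree_coloring; case: ifP => [yx|_]; case: ifP => // xy.
by have := child_asym xy; rewrite yx.
Qed.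

Lemma tree_coloring_child x y : child x y -> tree_coloring x y = vertex_color (lab x).
Proof. by move=> xy; rewrite /tree_coloring (negbTE (child_asym xy)) xy. Qed.

Hypothesis lab_proper :
  {in [set~ r] &, forall a b, a != b -> tree_edges_meet a b -> lab a != lab b}.

Lemma tree_coloring_proper : proper_tree tree_rel tree_coloring.
Proof.
have color_ne a b : a != r -> b != r -> a != b -> tree_edges_meet a b ->
    vertex_color (lab a) != vertex_color (lab b).
  by move=> ar br ab meet; rewrite eq_vertex_color lab_proper ?inE.
have child_neq a b : child a b -> a != b.
  by move=> /child_edge [_]; apply: contraTneq => ->; rewrite ltnn.
move=> x y z xy yz xz.
case/orP: xy => [cxy|cyx]; case/orP: yz => [cyz|czy].
- rewrite !tree_coloring_child //.
  case/andP: (cxy) (cyz) => xr /eqP pxy /andP [yr _].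
  by apply: color_ne => //; [exact: child_neq | rewrite /tree_edges_meet pxy eqxx !orbT].
- rewrite [tree_coloring y z]tree_coloring_sym !tree_coloring_child //.
  case/andP: cxy czy => xr /eqP pxy /andP [zr /eqP pzy].
  by apply: color_ne; rewrite // /tree_edges_meet pxy pzy eqxx !orbT.
- case/andP: cyx cyz => _ /eqP pyx /andP [_ /eqP pyz].
  by rewrite -pyx pyz eqxx in xz.
- rewrite tree_coloring_sym [tree_coloring y z]tree_coloring_sym !tree_coloring_child //.
  case/andP: (cyx) (czy) => yr _ /andP [zr /eqP pzy].
  apply: color_ne => //; last by rewrite /tree_edges_meet pzy eqxx orbT.
  by rewrite eq_sym; apply: child_neq.
Qed.

Lemma tree_coloring_k_proper k : k_proper_coloring e k tree_coloring.
Proof.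
split=> [x y _|S _]; first exact: tree_coloring_sym.
exists [set: T], tree_rel; split; rewrite ?subsetT //.
- exact: tree_rel_subgraph.
- exact: tree_rel_spanning_tree.
- exact: tree_coloring_proper.
Qed.

Lemma ncolors_tree_coloring : z0 != r -> ncolors e tree_coloring <= #|lab @: [set~ r]|.
Proof.
move=> z0r; apply: ncolors_le_card => x y _; rewrite /tree_coloring.
case: ifP => [/andP [yr _]|_]; last case: ifP => [/andP [xr _]|_];
  by eexists; [apply: imset_f; rewrite !inE | reflexivity].
Qed.

End TreeColoring.
End RootedTree.

Lemma tree_edges_meetC (T : finType) (par : T -> T) a b :
  tree_edges_meet par a b = tree_edges_meet par b a.
Proof.
rewrite /tree_edges_meet !(eq_sym b) !(eq_sym (par b)).
by rewrite (orbCA (a == par b)).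
Qed.

Lemma exists_notin (T : finType) (s : seq T) : size s < #|T| -> exists w, w \notin s.
Proof.
move=> ltsT; apply/existsP; rewrite -negb_forall; apply: contraTN ltsT => /forallP sT.
rewrite -leqNgt; apply: leq_trans (card_size s).
by apply: subset_leq_card; apply/subsetP => x _; apply: sT.
Qed.

Section Stars.
Variables (T : finType) (e : rel T).
Hypothesis sg : simple_graph e.

Definition star_centered (r : T) : bool :=
  [forall x, forall y, e x y == ((x == r) != (y == r))].

Lemma star_centeredP r :
  reflect (forall x y, e x y = ((x == r) != (y == r))) (star_centered r).
Proof.
apply: (iffP forallP) => [star x y|star x]; last by apply/forallP => y; rewrite star.
by apply/eqP; move/forallP: (star x).
Qed.



Definition has_disjoint_tree_edges : Prop :=
  exists r par d u w,
    [/\ rooted_tree e r par d, u != r, w != r & ~~ tree_edges_meet par u w].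

Lemma disjoint_tree_edges_ncolors k :
  has_disjoint_tree_edges ->
  exists c, k_proper_coloring e k c /\ ncolors e c <= #|T| - 2.
Proof.
case=> r [par [d [u [w [tree ur wr uw]]]]]; pose lab v := if v == u then w else v.
have lab_proper : {in [set~ r] &, forall a b, a != b ->
    tree_edges_meet par a b -> lab a != lab b}.
  move=> a b _ _ ab meet; rewrite /lab.
  have [au|ua] := eqVneq a u; have [bu|ub] := eqVneq b u.
  - by rewrite au bu eqxx in ab.
  - by apply: contraNneq uw => wb; rewrite -au wb.
  - by apply: contraNneq uw => aw; rewrite tree_edges_meetC -bu -aw.
  - exact: ab.
exists (tree_coloring r par lab w); split.
  exact: (tree_coloring_k_proper sg tree w lab_proper k).
apply: leq_trans (ncolors_tree_coloring e par lab wr) _.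
have : lab @: [set~ r] \subset [set~ r] :\ u.
  apply/subsetP => y /imsetP [v]; rewrite /lab !inE => vr ->.
  case: ifP => [_|/negbT -> //]; rewrite wr andbT eq_sym.
  by case/norP: uw.
move/subset_leq_card/leq_trans; apply.
have := cardsD1 u [set~ r]; rewrite cardsC1 !inE ur add1n => card_u.
by rewrite subn2 card_u.
Qed.

Lemma dominating_disjoint_tree_edges r :
  3 < #|T| -> (forall x, x != r -> e r x) -> ~~ star_centered r ->
  has_disjoint_tree_edges.
Proof.
case: sg => e_sym e_irr n4 dom nstar.
have [a [b [ar br eab]]] : exists a b, [/\ a != r, b != r & e a b].
  case/forallPn: nstar => a /forallPn [b].
  have [->|ar] := eqVneq a r; have [->|br] := eqVneq b r; rewrite ?e_irr ?eqxx //=.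
  - by rewrite dom.
  - by rewrite e_sym dom.
  by case: (boolP (e a b)) => // eab _; exists a, b.
have ab : a != b by apply: contraTneq eab => ->; rewrite e_irr.
have [w] : exists w, w \notin [:: r; a; b] by apply: exists_notin.
rewrite !inE => /norP [wr /norP [wa wb]].
(* Hang b from a and every other vertex from r. *)
pose par x := if x == b then a else r.
pose d x := if x == r then 0 else if x == b then 2 else 1.
exists r, par, d, b, w; split=> //.
- move=> x xr; rewrite /par /d; have [->|xb] := eqVneq x b.
    by rewrite e_sym eab (negbTE ar) (negbTE ab) (negbTE br).
  by rewrite e_sym dom // eqxx (negbTE xr).
- rewrite /tree_edges_meet /par eqxx (negbTE wb).
  by rewrite !(eq_sym _ w) (negbTE wb) (negbTE wa) (negbTE br) (negbTE ar).
Qed.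

Lemma nondominating_disjoint_tree_edges (r : T) :
  connected_graph e -> (forall x, exists2 y, y != x & ~~ e x y) ->
  has_disjoint_tree_edges.
Proof.
case: sg => e_sym e_irr conn nondom.
have [par [d tree]] := exists_rooted_tree e_sym conn r.
have d_neq a b : d b < d a -> (a == b) = false.
  by move=> lt_ba; apply: contraTF lt_ba => /eqP ->; rewrite ltnn.
have [x xr nrx] := nondom r.
have [exp dpx] := tree x xr; set p := par x in exp dpx.
have pr : p != r by apply: contraNneq nrx => <-; rewrite e_sym.
have [epq dqp] := tree p pr; set q := par p in epq dqp.
have [y yp npy] := nondom p.
(* Among (x, p), (y, par y), (p, q) and (q, par q) two edges are disjoint. *)
have npar a : e p a -> (y == a) = false by move=> epa; apply: contraNF npy => /eqP ->.
have [yr | yr] := eqVneq y r.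
  have qr : q != r by rewrite eq_sym -yr npar.
  have [_ dq'q] := tree q qr.
  exists r, par, d, x, q; split=> //.
  have dq'p := ltn_trans dq'q dqp.
  rewrite /tree_edges_meet !d_neq //; exact: ltn_trans dpx.
have [eyy' dy'y] := tree y yr.
have py'p : (par y == p) = false by apply: contraNF npy => /eqP <-; rewrite e_sym.
have [yx | yx] := eqVneq (par y) x.
  exists r, par, d, y, p; split=> //.
  by rewrite /tree_edges_meet (negbTE yp) npar // py'p yx d_neq // (ltn_trans dqp).
exists r, par, d, x, y; split=> //.
have epx : e p x by rewrite e_sym.
rewrite /tree_edges_meet eq_sym npar // eq_sym (negbTE yx) eq_sym (negbTE yp).
by rewrite eq_sym py'p.
Qed.

Lemma nonstar_disjoint_tree_edges :
  connected_graph e -> 3 < #|T| -> (forall r, ~~ star_centered r) ->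
  has_disjoint_tree_edges.
Proof.
move=> conn n4 nstar; have /card_gt0P [r0 _] : 0 < #|T| by exact: leq_trans n4.
case: (boolP [exists r, [forall x, (x != r) ==> e r x]]) => [|/existsPn nondom].
  case/existsP=> r /forallP dom; apply: (dominating_disjoint_tree_edges n4 _ (nstar r)).
  by move=> x; apply/implyP.
apply: (nondominating_disjoint_tree_edges r0 conn) => x.
by case/forallPn: (nondom x) => y; rewrite negb_imply => /andP [yx nexy]; exists y.
Qed.

Lemma star_ncolors_lower r k c :
  star_centered r -> 2 <= k <= #|T| -> k_proper_coloring e k c ->
  #|T| - 1 <= ncolors e c.
Proof.
move=> /star_centeredP star /andP [k2 kT] [c_sym kp].
have leaf_neq x y : x != r -> e x y -> y = r.
  by move=> xr; rewrite star (negbTE xr) /= => /negbNE /eqP.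
have leaf_colors a b : a != r -> b != r -> a != b -> c r a != c r b.
  move=> ar br ab.
  have [S abS cardS] : exists2 S : {set T}, [set a; b] \subset S & #|S| = k.
    by apply: exists_superset_card; rewrite cards2 ab kT andbT.
  have [V [f [[f_sym f_e] [_ f_conn _] SV proper]]] := kp S cardS.
  have [aV bV] : a \in V /\ b \in V.
    by split; apply: (subsetP SV); apply: (subsetP abS); rewrite !inE eqxx ?orbT.
  have f_leaf x y : x != r -> f x y -> y = r.
    by move=> xr /f_e /and3P [exy _ _]; exact: leaf_neq exy.
  (* The tree path from a to b must be a r b. *)
  have [y fay] := connect_first_step (f_conn _ _ aV bV) ab.
  have [z fbz] : exists z, f b z.
    by apply: connect_first_step (f_conn _ _ bV aV) _; rewrite eq_sym.
  move: (f_leaf _ _ ar fay) (f_leaf _ _ br fbz) => yr zr; subst y z.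
  rewrite f_sym in fbz.
  have := proper _ _ _ fay fbz ab.
  by rewrite (c_sym a r) // star eqxx (negbTE ar).
pose M := [seq c r a | a <- enum [set~ r]].
have uniqM : uniq M.
  rewrite map_inj_in_uniq ?enum_uniq // => a b; rewrite !mem_enum !inE => ar br.
  by apply: contra_eq; apply: leaf_colors.
rewrite subn1 -(cardsC1 r) cardE -(size_map (c r)); apply: uniq_leq_size uniqM _ => i.
case/mapP=> a; rewrite mem_enum !inE => ar ->; rewrite /ncolors mem_undup.
by apply/mapP; exists (r, a); rewrite // mem_enum inE /= star eqxx (negbTE ar).
Qed.

Lemma star_k_proper_coloring r k :
  star_centered r -> 1 < #|T| ->
  exists c, k_proper_coloring e k c /\ ncolors e c <= #|T| - 1.
Proof.
move=> /star_centeredP star n1.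
have /card_gt0P [z0] : 0 < #|[set~ r]| by rewrite cardsC1 -subn1 subn_gt0.
rewrite !inE => z0r.
pose d x := nat_of_bool (x != r).
have tree : rooted_tree e r (fun=> r) d.
  by move=> x xr; rewrite /d star eqxx (negbTE xr).
exists (tree_coloring r (fun=> r) id z0); split.
  by apply: (tree_coloring_k_proper sg tree) => a b.
apply: leq_trans (ncolors_tree_coloring e _ id z0r) _.
by rewrite imset_id cardsC1 subn1.
Qed.

Lemma star_pxk r k :
  star_centered r -> 2 <= k <= #|T| -> pxk_eq e k (#|T| - 1).
Proof.
move=> star k_bounds; have lower := star_ncolors_lower star k_bounds.
have n1 : 1 < #|T| by case/andP: k_bounds; exact: leq_trans.
have [c [kp upper]] := star_k_proper_coloring k star n1.
split=> [|m [c' [kp' <-]]]; last exact: lower.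
by exists c; split=> //; apply/eqP; rewrite eqn_leq upper lower.
Qed.

End Stars.

Lemma graph_iso_star (T : finType) (e : rel T) :
  0 < #|T| -> graph_iso e (@star_rel #|T|) <-> exists r, star_centered e r.
Proof.
move=> n0; pose o0 : 'I_#|T| := Ordinal n0; split.
  case=> f [[g fK gK] f_iso]; exists (g o0); apply/star_centeredP => x y.
  have center z : (val (f z) == 0) = (z == g o0).
    apply/eqP/eqP => [fz0|->]; last by rewrite gK.
    by rewrite -[z]fK; congr g; apply: val_inj.
  by rewrite -f_iso /star_rel !center.
case=> r /star_centeredP star; pose f x := tperm (enum_rank r) o0 (enum_rank x).
have f_bij : bijective f.
  by exists (fun i => enum_val (tperm (enum_rank r) o0 i)) => [x|i];
    rewrite /f ?tpermK ?enum_rankK ?enum_valK ?tpermK.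
have center z : (val (f z) == 0) = (z == r).
  have -> : (val (f z) == 0) = (f z == o0) by [].
  by rewrite (_ : o0 = f r) ?(inj_eq (bij_inj f_bij)) // /f tpermL.
by exists f; split=> // x y; rewrite /star_rel !center star.
Qed.

Theorem mainTheorem16 (T : finType) (e : rel T) (k : nat) :
  simple_graph e -> connected_graph e ->
  4 <= #|T| -> 3 <= k -> k <= #|T| ->
  (pxk_eq e k (#|T| - 1) <-> graph_iso e (@star_rel #|T|)).
Proof.
move=> sg conn n4 k3 kT; rewrite graph_iso_star; last exact: leq_trans n4.
split=> [[_ px_min] | [r star]]; last first.
  by apply: (star_pxk sg star); rewrite kT andbT ltnW.
case: (boolP [exists r, star_centered e r]) => [/existsP // | /existsPn nstar].
have [c [kp few_colors]] :=
  disjoint_tree_edges_ncolors sg k (nonstar_disjoint_tree_edges sg conn n4 nstar).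
have := leq_trans (px_min _ (ex_intro _ c (conj kp erefl))) few_colors.
lia.
Qed.
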